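(* $\mathrm{rk}(|W\rangle^{\otimes 2})\le 8$, where $|W\rangle=|001\rangle+|010\rangle+|100\rangle$ is the three-qubit W state (one qubit each for parties $A,B,C$, normalization irrelevant) and $|W\rangle^{\otimes2}$ is viewed as a tripartite tensor in $(\mathbb{C}^2\otimes\mathbb{C}^2)_A\otimes(\mathbb{C}^2\otimes\mathbb{C}^2)_B\otimes(\mathbb{C}^2\otimes\mathbb{C}^2)_C$, each party holding its qubits from both copies.
   Context: The tensor rank $\mathrm{rk}(|\phi\rangle)$ of $|\phi\rangle\in H_A\otimes H_B\otimes H_C$ is the minimum $r$ such that $|\phi\rangle=\sum_{j=1}^r|a_j\rangle|b_j\rangle|c_j\rangle$ with $|a_j\rangle\in H_A,|b_j\rangle\in H_B,|c_j\rangle\in H_C$. *)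

From HB Require Import structures.
From mathcomp Require Import all_boot all_order all_algebra all_field.
Set Implicit Arguments. Unset Strict Implicit. Unset Printing Implicit Defensive.
Import GRing.Theory Num.Theory.
Local Open Scope ring_scope.

Definition tensor3 (IA IB IC : finType) := IA -> IB -> IC -> algC.

Definition decomposes_with (IA IB IC : finType) (phi : tensor3 IA IB IC) (r : nat) :=
  exists (a : 'I_r -> IA -> algC) (b : 'I_r -> IB -> algC) (c : 'I_r -> IC -> algC),
    forall i j k, phi i j k = \sum_(l < r) a l i * b l j * c l k.

Definition tensor_rank_le (IA IB IC : finType) (phi : tensor3 IA IB IC) (n : nat) :=
  exists r, (r <= n)%N /\ decomposes_with phi r.

Definition W_state : tensor3 'I_2 'I_2 'I_2 :=
  fun a b c => if ((a : nat) + b + c == 1)%N then 1 else 0.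

(* |W>^{(x)2}, party X holding qubits (x1, x2) from copies 1 and 2:
   coefficient of |a1 a2>_A |b1 b2>_B |c1 c2>_C is W(a1,b1,c1) * W(a2,b2,c2). *)
Definition W_tensor_square : tensor3 ('I_2 * 'I_2)%type ('I_2 * 'I_2)%type ('I_2 * 'I_2)%type :=
  fun a b c => W_state a.1 b.1 c.1 * W_state a.2 b.2 c.2.

From mathcomp Require Import all_boot all_order all_algebra all_field.
Import GRing.Theory Num.Theory.
Local Open Scope ring_scope.

(* The coefficient of |W>^{(x)2} at (i, j, k) is [i1 + m1 = 1] [i2 + m2 = 1]
   with m = j + k in {0,1,2}^2: it depends on the B and C indices only through
   their sum.  So take b_l = c_l = (1, s_l) (x) (1, t_l), whose product at (j, k)
   is the monomial s_l^m1 t_l^m2.  It then suffices to find eight nodes (s_l, t_l)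
   and weights a_l(i) such that, for each i, the quadrature rule
   p |-> sum_l a_l(i) p(s_l, t_l) extracts from every polynomial of bidegree
   <= (2, 2) the coefficient selected by i: 36 linear identities, checked in
   integer arithmetic after clearing the common denominator 12. *)

Lemma addn_ord2_lt3 (x y : 'I_2) : (x + y < 3)%N.
Proof. by case: x y => [[|[|//]] ?] [[|[|//]] ?]. Qed.

Lemma decomposes_with_moments (I : finType) (r : nat)
    (phi : tensor3 I ('I_2 * 'I_2)%type ('I_2 * 'I_2)%type)
    (g : I -> nat -> nat -> algC) (a : 'I_r -> I -> algC) (s t : 'I_r -> algC) :
  (forall i j k, phi i j k = g i (j.1 + k.1)%N (j.2 + k.2)%N) ->
  (forall i (m1 m2 : 'I_3), g i m1 m2 = \sum_l a l i * (s l ^+ m1 * t l ^+ m2)) ->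
  decomposes_with phi r.
Proof.
move=> phiE gE; pose v l (j : 'I_2 * 'I_2) := s l ^+ j.1 * t l ^+ j.2.
exists a, v, v => i j k; rewrite phiE.
rewrite (gE i (Ordinal (addn_ord2_lt3 j.1 k.1)) (Ordinal (addn_ord2_lt3 j.2 k.2))).
by apply: eq_bigr => l _; rewrite /v /= !exprD mulrACA -[RHS]mulrA.
Qed.

Definition W_square_moment (i : 'I_2 * 'I_2) (m1 m2 : nat) : int :=
  ((i.1 + m1 == 1)%N && (i.2 + m2 == 1)%N)%:R.

Lemma W_tensor_square_moment i j k :
  W_tensor_square i j k = (W_square_moment i (j.1 + k.1) (j.2 + k.2))%:~R.
Proof.
rewrite /W_tensor_square /W_state /W_square_moment !addnA.
by case: (_ == 1)%N; case: (_ == 1)%N; rewrite ?mulr1 ?mulr0.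
Qed.

(* Row l lists 12 a_l(i) for i = 00, 01, 10, 11. *)
Definition W_square_weights (l : 'I_8) (i : 'I_2 * 'I_2) : int :=
  nth 0 (nth [::] [:: [:: 3; 6; 6; 0]; [:: 3; -2; -2; 0]; [:: 0; -1; -1; 0];
    [:: 0; 0; 0; 12]; [:: -3; 2; -6; 0]; [:: -3; -6; 2; 0]; [:: 0; 0; 1; 0];
    [:: 0; 1; 0; 0]] l) (2 * i.1 + i.2).

Definition W_square_nodes1 (l : 'I_8) : int :=
  nth 0 [:: 1; -1; 2; 0; 1; -1; 2; -2] l.

Definition W_square_nodes2 (l : 'I_8) : int :=
  nth 0 [:: 1; -1; 2; 0; -1; 1; -2; 2] l.

Lemma W_square_moments_int i (m1 m2 : 'I_3) :
  12 * W_square_moment i m1 m2 =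
  \sum_l W_square_weights l i * (W_square_nodes1 l ^+ m1 * W_square_nodes2 l ^+ m2).
Proof.
rewrite !big_ord_recl big_ord0.
by case: i m1 m2 => [[[|[|//]] ?] [[|[|//]] ?]] [[|[|[|//]]] ?] [[|[|[|//]]] ?].
Qed.

Theorem lemma1 : tensor_rank_le W_tensor_square 8.
Proof.
exists 8%N; split => //.
apply: (@decomposes_with_moments _ _ _ (fun i m1 m2 => (W_square_moment i m1 m2)%:~R)
  (fun l i => (W_square_weights l i)%:~R / 12)
  (fun l => (W_square_nodes1 l)%:~R) (fun l => (W_square_nodes2 l)%:~R)).
  exact: W_tensor_square_moment.
move=> i m1 m2; have nz12 : (12%:~R : algC) != 0 by rewrite intr_eq0.
apply: (mulfI nz12); rewrite mulr_sumr -rmorphM W_square_moments_int rmorph_sum.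
apply: eq_bigr => l _.
by rewrite !rmorphM !rmorphXn /= [RHS]mulrA [12%:~R * _]mulrC divfK.
Qed.
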